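(* Let $m\ge 2$ be an integer and let $f(1,1,m)$ be the minimum number of sets in an antipodal $(1,m)$-fold cover of the circle $S^1$ with open sets. Then $f(1,1,m)=2+m$.
   Context: $S^1$ denotes the unit circle in $\mathbb{R}^{2}$ centered at the origin. A cover of $S^1$ is a (finite) family of subsets of $S^1$; it is an $n$-fold cover if every point belongs to at least $n$ of the sets. A cover is antipodal if none of its sets contains a pair of antipodal points $x,-x$. The open northern hemisphere is $\{x\in S^1: x_{2}>0\}$. For $m>n\ge 1$, an $(n,m)$-fold cover is an $n$-fold cover in which every point of the open northern hemisphere belongs to at least $m$ of the sets. *)

From Stdlib Require Import Reals List.
Open Scope R_scope.

Definition point := (R * R)%type.

Definition S1 (p : point) : Prop := fst p ^ 2 + snd p ^ 2 = 1.

Definition antipode (p : point) : point := (- fst p, - snd p).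

Definition dist2 (p q : point) : R :=
  sqrt ((fst p - fst q) ^ 2 + (snd p - snd q) ^ 2).

Definition open_in_S1 (A : point -> Prop) : Prop :=
  forall p, A p -> exists eps, 0 < eps /\
    forall q, S1 q -> dist2 p q < eps -> A q.

(* A set_family of k sets is indexed by i < k. *)
Definition set_family := nat -> point -> Prop.

Definition family_of_subsets (k : nat) (A : set_family) : Prop :=
  forall i p, (i < k)%nat -> A i p -> S1 p.

Definition in_at_least (n k : nat) (A : set_family) (p : point) : Prop :=
  exists l : list nat, NoDup l /\ length l = n /\
    forall i, In i l -> (i < k)%nat /\ A i p.

Definition nfold_cover (n k : nat) (A : set_family) : Prop :=
  family_of_subsets k A /\ forall p, S1 p -> in_at_least n k A p.

Definition antipodal (k : nat) (A : set_family) : Prop :=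
  forall i p, (i < k)%nat -> A i p -> ~ A i (antipode p).

Definition north (p : point) : Prop := S1 p /\ 0 < snd p.

Definition nm_fold_cover (n m k : nat) (A : set_family) : Prop :=
  nfold_cover n k A /\ forall p, north p -> in_at_least m k A p.

Definition antipodal_open_nm_cover (n m k : nat) (A : set_family) : Prop :=
  nm_fold_cover n m k A /\ antipodal k A /\ forall i, (i < k)%nat -> open_in_S1 (A i).

(* Upper bound: m copies of the northern open half-circle together with two open
   half-circles covering the closed southern half.
   Lower bound: the antipode of a northern point lies in a set missing that point,
   so there are at least m + 1 sets.  If there are exactly m + 1, every southern
   point lies in exactly one set; the open southern half-circle is connected, so it
   lies in a single set c.  The set containing (1,0) also contains nearby points on
   both sides of the equator: if it is c, it contains a northern point together with
   its antipode; otherwise it contains a southern point whose antipode, being a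
   northern point with antipode in c, lies in every other set. *)

From Stdlib Require Import Reals List Lra Lia Psatz Classical.
Open Scope R_scope.

Lemma NoDup_length_le_bound (l : list nat) (k : nat) :
  NoDup l -> (forall i, In i l -> (i < k)%nat) -> (length l <= k)%nat.
Proof.
  intros ND H. rewrite <- (length_seq k 0). apply NoDup_incl_length; auto.
  intros i Hi. apply in_seq. specialize (H i Hi). lia.
Qed.

Lemma in_at_least_missing_le n k A p (l0 : list nat) :
  in_at_least n k A p -> NoDup l0 -> (forall i, In i l0 -> (i < k)%nat /\ ~ A i p) ->
  (n + length l0 <= k)%nat.
Proof.
  intros [l [NDl [len Hl]]] ND0 H0. rewrite <- len, <- length_app.
  apply NoDup_length_le_bound.
  - apply NoDup_app; auto. intros i Hi Hi0. exact (proj2 (H0 i Hi0) (proj2 (Hl i Hi))).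
  - intros i Hi. apply in_app_or in Hi as [Hi|Hi]; [apply Hl|apply H0]; exact Hi.
Qed.

Lemma in_at_least_1 k A p : in_at_least 1 k A p -> exists i, (i < k)%nat /\ A i p.
Proof.
  intros [[|i l] [_ [len H]]]; [discriminate|]. exists i. apply H. left; reflexivity.
Qed.

Lemma in_at_least_1_of k A p i : (i < k)%nat -> A i p -> in_at_least 1 k A p.
Proof.
  intros ik Ai. exists (i :: nil). split; [repeat constructor; intros []|].
  split; [reflexivity|]. intros j [<-|[]]. split; assumption.
Qed.

Lemma antipode_involutive p : antipode (antipode p) = p.
Proof. destruct p; unfold antipode; cbn; rewrite !Ropp_involutive; reflexivity. Qed.

Lemma S1_antipode p : S1 p -> S1 (antipode p).
Proof. destruct p; unfold S1, antipode; cbn; intros; nra. Qed.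

Lemma dist2_antipode p q : dist2 (antipode p) (antipode q) = dist2 p q.
Proof. destruct p, q; unfold dist2, antipode; cbn [fst snd]. f_equal. ring. Qed.

Lemma Rabs_fst_sub_le_dist2 p q : Rabs (fst p - fst q) <= dist2 p q.
Proof.
  unfold dist2. rewrite <- (sqrt_pow2 (Rabs (fst p - fst q))) by apply Rabs_pos.
  apply sqrt_le_1_alt. rewrite pow2_abs. pose proof (pow2_ge_0 (snd p - snd q)). lra.
Qed.

Lemma Rabs_snd_sub_le_dist2 p q : Rabs (snd p - snd q) <= dist2 p q.
Proof.
  unfold dist2. rewrite <- (sqrt_pow2 (Rabs (snd p - snd q))) by apply Rabs_pos.
  apply sqrt_le_1_alt. rewrite pow2_abs. pose proof (pow2_ge_0 (fst p - fst q)). lra.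
Qed.

Lemma open_in_S1_antipode B : open_in_S1 B -> open_in_S1 (fun p => B (antipode p)).
Proof.
  intros HB p Bp. destruct (HB _ Bp) as [e [epos He]]. exists e. split; [exact epos|].
  intros q Sq Hd. apply He; [apply S1_antipode, Sq|]. rewrite dist2_antipode. exact Hd.
Qed.

Lemma antipodal_not_both k A i p :
  antipodal k A -> (i < k)%nat -> A i (antipode p) -> ~ A i p.
Proof.
  intros HA ik Ai Aip. apply (HA i (antipode p) ik Ai). rewrite antipode_involutive. exact Aip.
Qed.

Definition dot (v p : point) : R := fst v * fst p + snd v * snd p.

Definition halfplane (v : point) (p : point) : Prop := S1 p /\ 0 < dot v p.

Lemma dot_sub_le_dist2 v p q :
  dot v p - dot v q <= (Rabs (fst v) + Rabs (snd v)) * dist2 p q.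
Proof.
  unfold dot.
  assert (H1 : fst v * (fst p - fst q) <= Rabs (fst v) * dist2 p q).
  { eapply Rle_trans; [apply Rle_abs|]. rewrite Rabs_mult.
    apply Rmult_le_compat_l; [apply Rabs_pos|apply Rabs_fst_sub_le_dist2]. }
  assert (H2 : snd v * (snd p - snd q) <= Rabs (snd v) * dist2 p q).
  { eapply Rle_trans; [apply Rle_abs|]. rewrite Rabs_mult.
    apply Rmult_le_compat_l; [apply Rabs_pos|apply Rabs_snd_sub_le_dist2]. }
  lra.
Qed.

Lemma halfplane_open v : open_in_S1 (halfplane v).
Proof.
  intros p [_ Hp].
  set (N := 1 + Rabs (fst v) + Rabs (snd v)).
  assert (HN : 1 <= N).
  { pose proof (Rabs_pos (fst v)). pose proof (Rabs_pos (snd v)). unfold N; lra. }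
  exists (dot v p / N). split; [apply Rdiv_lt_0_compat; lra|].
  intros q Sq Hd. split; [exact Sq|].
  pose proof (dot_sub_le_dist2 v p q) as HL.
  assert (Hd0 : 0 <= dist2 p q) by apply sqrt_pos.
  apply (Rmult_lt_compat_r N) in Hd; [|lra].
  unfold Rdiv in Hd. rewrite Rmult_assoc, Rinv_l, Rmult_1_r in Hd by lra.
  unfold N in *. nra.
Qed.

Lemma halfplane_antipodal v p : halfplane v p -> ~ halfplane v (antipode p).
Proof. destruct p; unfold halfplane, dot, antipode; cbn [fst snd]; intros [_ H] [_ H']; lra. Qed.

Definition cover_normal (m i : nat) : point :=
  if Nat.ltb i m then (0, 1) else if Nat.eqb i m then (1, -1) else (-1, -1).

Definition halfplane_cover (m : nat) : set_family := fun i => halfplane (cover_normal m i).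

Lemma halfplane_cover_spec m :
  (1 <= m)%nat -> antipodal_open_nm_cover 1 m (m + 2) (halfplane_cover m).
Proof.
  intros m1.
  assert (Hlt : forall i, (i < m)%nat -> cover_normal m i = (0, 1)).
  { intros i Hi. unfold cover_normal. apply Nat.ltb_lt in Hi. rewrite Hi. reflexivity. }
  assert (Hm : cover_normal m m = (1, -1)).
  { unfold cover_normal. rewrite Nat.ltb_irrefl, Nat.eqb_refl. reflexivity. }
  assert (Hm1 : cover_normal m (m + 1) = (-1, -1)).
  { unfold cover_normal.
    replace (Nat.ltb (m + 1) m) with false by (symmetry; apply Nat.ltb_ge; lia).
    replace (Nat.eqb (m + 1) m) with false by (symmetry; apply Nat.eqb_neq; lia). reflexivity. }
  split; [split; [split|] | split].
  - intros i p _ [Sp _]. exact Sp.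
  - intros [x y] Sp. unfold S1 in Sp; cbn in Sp.
    destruct (Rlt_dec 0 y); [|destruct (Rlt_dec 0 (x - y))].
    + apply (in_at_least_1_of _ _ _ 0); [lia|]. split; [exact Sp|].
      unfold dot. rewrite Hlt by lia. cbn; lra.
    + apply (in_at_least_1_of _ _ _ m); [lia|]. split; [exact Sp|].
      unfold dot. rewrite Hm. cbn; lra.
    + apply (in_at_least_1_of _ _ _ (m + 1)); [lia|]. split; [exact Sp|].
      unfold dot. rewrite Hm1. cbn. nra.
  - intros p [Sp Hy]. exists (seq 0 m). split; [apply seq_NoDup|].
    split; [apply length_seq|]. intros i Hi. apply in_seq in Hi. split; [lia|].
    split; [exact Sp|]. unfold dot. rewrite Hlt by lia. cbn; lra.
  - intros i p _. apply halfplane_antipodal.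
  - intros i _. apply halfplane_open.
Qed.

Definition circle_pt (t : R) : point := ((1 - t ^ 2) / (1 + t ^ 2), 2 * t / (1 + t ^ 2)).

Lemma one_plus_sqr_pos t : 0 < 1 + t ^ 2.
Proof. pose proof (pow2_ge_0 t). lra. Qed.

Lemma S1_circle_pt t : S1 (circle_pt t).
Proof. unfold S1, circle_pt; cbn [fst snd]. pose proof (one_plus_sqr_pos t). field. lra. Qed.

Lemma north_circle_pt t : 0 < t -> north (circle_pt t).
Proof.
  intros Ht. split; [apply S1_circle_pt|]. unfold circle_pt; cbn [snd].
  pose proof (one_plus_sqr_pos t). apply Rdiv_lt_0_compat; lra.
Qed.

Lemma antipode_circle_pt_inv t : t <> 0 -> antipode (circle_pt (/ t)) = circle_pt (- t).
Proof.
  intros Ht. unfold antipode, circle_pt; cbn [fst snd].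
  assert (t ^ 2 <> 0) by (apply pow_nonzero; exact Ht).
  pose proof (one_plus_sqr_pos t). pose proof (one_plus_sqr_pos (/ t)).
  f_equal; field; repeat split; auto; lra.
Qed.

Lemma dist2_circle_pt t u : dist2 (circle_pt t) (circle_pt u) <= 2 * Rabs (t - u).
Proof.
  unfold dist2, circle_pt; cbn [fst snd].
  pose proof (one_plus_sqr_pos t) as Ht. pose proof (one_plus_sqr_pos u) as Hu.
  set (S := ((1 - t ^ 2) / (1 + t ^ 2) - (1 - u ^ 2) / (1 + u ^ 2)) ^ 2 +
     (2 * t / (1 + t ^ 2) - 2 * u / (1 + u ^ 2)) ^ 2).
  assert (HS : S * ((1 + t ^ 2) * (1 + u ^ 2)) = 4 * (t - u) ^ 2) by (unfold S; field; lra).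
  assert (S0 : 0 <= S) by (unfold S; apply Rplus_le_le_0_compat; apply pow2_ge_0).
  rewrite <- (sqrt_pow2 (2 * Rabs (t - u))) by (pose proof (Rabs_pos (t - u)); lra).
  apply sqrt_le_1_alt.
  replace ((2 * Rabs (t - u)) ^ 2) with (4 * Rabs (t - u) ^ 2) by ring. rewrite pow2_abs.
  assert (1 <= (1 + t ^ 2) * (1 + u ^ 2)).
  { pose proof (pow2_ge_0 t). pose proof (pow2_ge_0 u). nra. }
  assert (S <= S * ((1 + t ^ 2) * (1 + u ^ 2))).
  { rewrite <- (Rmult_1_r S) at 1. apply Rmult_le_compat_l; lra. }
  lra.
Qed.

Lemma open_in_S1_circle_pt B t : open_in_S1 B -> B (circle_pt t) ->
  exists d, 0 < d /\ forall u, Rabs (u - t) < d -> B (circle_pt u).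
Proof.
  intros HB Bt. destruct (HB _ Bt) as [e [epos He]].
  exists (e / 2). split; [lra|]. intros u Hu. apply He; [apply S1_circle_pt|].
  pose proof (dist2_circle_pt t u). rewrite Rabs_minus_sym in Hu. lra.
Qed.

Definition open_on_pos (Q : R -> Prop) : Prop :=
  forall t, 0 < t -> Q t -> exists d, 0 < d /\ forall u, 0 < u -> Rabs (u - t) < d -> Q u.

Lemma Rabs_lt_between x d : - d < x < d -> Rabs x < d.
Proof. intros. unfold Rabs; destruct Rcase_abs; lra. Qed.

Lemma clopen_on_pos_le Q : open_on_pos Q -> open_on_pos (fun t => ~ Q t) ->
  forall a b, 0 < a <= b -> Q a -> Q b.
Proof.
  intros HQ HnQ a b [a0 ab] Qa.
  set (E := fun s => a <= s <= b /\ forall u, a <= u <= s -> Q u).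
  assert (Ea : E a) by (split; [lra|]; intros u Hu; replace u with a by lra; exact Qa).
  assert (Eb : bound E) by (exists b; intros s [[_ sb] _]; exact sb).
  destruct (completeness E Eb (ex_intro _ a Ea)) as [s [Hub Hlub]].
  assert (sa : a <= s) by (apply Hub, Ea).
  assert (sb : s <= b) by (apply Hlub; intros x [[_ xb] _]; exact xb).
  assert (below : forall u, a <= u < s -> Q u).
  { intros u Hu. apply NNPP. intros nQu. enough (s <= u) by lra.
    apply Hlub. intros x [_ Hx]. destruct (Rle_dec x u) as [|xu]; [assumption|].
    exfalso. apply nQu, Hx. lra. }
  assert (Qs : Q s).
  { apply NNPP. intros nQs.
    assert (sa' : a < s) by (destruct (Req_dec a s) as [<-|]; [contradiction|lra]).
    destruct (HnQ s ltac:(lra) nQs) as [d [d0 Hd]].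
    set (u := Rmax a (s - d / 2)).
    assert (Hu : a <= u < s /\ s - d / 2 <= u) by (unfold u, Rmax; destruct Rle_dec; lra).
    apply (Hd u); [lra| apply Rabs_lt_between; lra | apply below; lra]. }
  destruct (Req_dec s b) as [<-|sb']; [exact Qs|exfalso].
  destruct (HQ s ltac:(lra) Qs) as [d [d0 Hd]].
  set (s' := Rmin b (s + d / 2)).
  assert (Hs' : s < s' <= b /\ s' <= s + d / 2) by (unfold s', Rmin; destruct Rle_dec; lra).
  assert (Es' : E s').
  { split; [lra|]. intros u Hu. destruct (Rlt_dec u s); [apply below; lra|].
    apply Hd; [lra|]. apply Rabs_lt_between; lra. }
  pose proof (Hub s' Es'). lra.
Qed.

Lemma clopen_on_pos_all Q : open_on_pos Q -> open_on_pos (fun t => ~ Q t) ->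
  Q 1 -> forall t, 0 < t -> Q t.
Proof.
  intros HQ HnQ Q1 t t0. destruct (Rle_dec 1 t).
  - apply (clopen_on_pos_le Q HQ HnQ 1 t); [lra|exact Q1].
  - apply NNPP. intros nQt.
    assert (HnnQ : open_on_pos (fun t => ~ ~ Q t)).
    { intros x x0 Hx. apply NNPP in Hx. destruct (HQ x x0 Hx) as [d [d0 Hd]].
      exists d. split; [exact d0|]. intros u u0 Hu nQu. exact (nQu (Hd u u0 Hu)). }
    exact (clopen_on_pos_le _ HnQ HnnQ t 1 ltac:(lra) nQt Q1).
Qed.

Lemma antipodal_cover_size_gt m k A :
  nm_fold_cover 1 m k A -> antipodal k A -> (m + 1 <= k)%nat.
Proof.
  intros [[_ Hcov] Hnorth] Hanti.
  pose proof (north_circle_pt 1 ltac:(lra)) as N1.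
  destruct (in_at_least_1 _ _ _ (Hcov _ (S1_antipode _ (proj1 N1)))) as [c [ck Ac]].
  apply (in_at_least_missing_le _ _ _ _ (c :: nil) (Hnorth _ N1)).
  { repeat constructor. intros []. }
  intros i [<-|[]]. split; [exact ck|]. exact (antipodal_not_both _ _ _ _ Hanti ck Ac).
Qed.

Section NoCoverWithOneSetLess.

Variables (m : nat) (A : set_family).
Hypothesis HA : antipodal_open_nm_cover 1 m (m + 1) A.

Lemma north_in_all_but c j q : north q -> (c < m + 1)%nat -> A c (antipode q) ->
  (j < m + 1)%nat -> j <> c -> A j q.
Proof.
  destruct HA as [[_ Hnorth] [Hanti _]].
  intros Nq ck Ac jk jc. apply NNPP. intros nAj.
  enough (m + 2 <= m + 1)%nat by lia.
  apply (in_at_least_missing_le _ _ _ _ (c :: j :: nil) (Hnorth _ Nq)).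
  - constructor; [intros [->|[]]; contradiction|]. repeat constructor. intros [].
  - intros i [<-|[<-|[]]]; split; auto. exact (antipodal_not_both _ _ _ _ Hanti ck Ac).
Qed.

Lemma south_in_one_set c : (c < m + 1)%nat -> A c (antipode (circle_pt 1)) ->
  forall t, 0 < t -> A c (antipode (circle_pt t)).
Proof.
  destruct HA as [[[_ Hcov] _] [Hanti Hopen]].
  intros ck Ac. apply clopen_on_pos_all; [| |exact Ac].
  - intros t _ At.
    destruct (open_in_S1_circle_pt _ t (open_in_S1_antipode _ (Hopen c ck)) At) as [d [d0 Hd]].
    exists d. split; [exact d0|]. intros u _. apply Hd.
  - intros t t0 nAt.
    destruct (in_at_least_1 _ _ _ (Hcov _ (S1_antipode _ (S1_circle_pt t)))) as [i [ik Ai]].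
    assert (ic : i <> c) by (intros ->; contradiction).
    destruct (open_in_S1_circle_pt _ t (open_in_S1_antipode _ (Hopen i ik)) Ai) as [d [d0 Hd]].
    exists d. split; [exact d0|]. intros u u0 Hu Au.
    apply (antipodal_not_both _ _ _ _ Hanti ik (Hd u Hu)).
    exact (north_in_all_but c i _ (north_circle_pt u u0) ck Au ik ic).
Qed.

Lemma no_antipodal_cover_with_one_set_less : False.
Proof.
  pose proof HA as [[[_ Hcov] _] [Hanti Hopen]].
  pose proof (north_circle_pt 1 ltac:(lra)) as N1.
  destruct (in_at_least_1 _ _ _ (Hcov _ (S1_antipode _ (proj1 N1)))) as [c [ck Ac]].
  pose proof (south_in_one_set c ck Ac) as Hsouth.
  destruct (in_at_least_1 _ _ _ (Hcov _ (S1_circle_pt 0))) as [j [jk Aj]].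
  destruct (open_in_S1_circle_pt _ 0 (Hopen j jk) Aj) as [d [d0 Hd]].
  set (t := d / 2). assert (t0 : 0 < t) by (unfold t; lra).
  destruct (Nat.eq_dec j c) as [->|jc].
  - apply (antipodal_not_both _ _ _ _ Hanti ck (Hsouth t t0)).
    apply Hd. rewrite Rminus_0_r, Rabs_pos_eq by lra. unfold t; lra.
  - assert (Hinv : 0 < / t) by (apply Rinv_0_lt_compat, t0).
    apply (antipodal_not_both _ _ _ (circle_pt (/ t)) Hanti jk).
    + rewrite antipode_circle_pt_inv by lra.
      apply Hd. rewrite Rminus_0_r, Rabs_Ropp, Rabs_pos_eq by lra. unfold t; lra.
    + exact (north_in_all_but c j _ (north_circle_pt _ Hinv) ck (Hsouth _ Hinv) jk jc).
Qed.

End NoCoverWithOneSetLess.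

Theorem proposition1 (m : nat) (hm : (2 <= m)%nat) :
  (exists A : set_family, antipodal_open_nm_cover 1 m (m + 2) A) /\
  (forall (k : nat) (A : set_family), antipodal_open_nm_cover 1 m k A -> (m + 2 <= k)%nat).
Proof.
  split.
  - exists (halfplane_cover m). apply halfplane_cover_spec. lia.
  - intros k A HA.
    pose proof (antipodal_cover_size_gt m k A (proj1 HA) (proj1 (proj2 HA))) as Hk.
    destruct (Nat.eq_dec k (m + 1)) as [->|]; [|lia].
    destruct (no_antipodal_cover_with_one_set_less m A HA).
Qed.
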